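(* Let $\alpha,\beta,\gamma\in\mathbb{Z}[i]$ satisfy $\alpha^2+\beta^2+\gamma^2=0$, $\alpha\beta\gamma\neq0$ and $\gcd(\alpha,\beta,\gamma)\in U$. Then $\alpha\beta\gamma\equiv0\pmod{(1+i)^2}$.
   Context: $\mathbb{Z}[i]$ is the ring of Gaussian integers, $U=\{1,-1,i,-i\}$ its unit group; $\gcd(\alpha,\beta,\gamma)\in U$ means the three have no common non-unit divisor. *)

(* Gaussian integers Z[i] realised inside algC. *)
From mathcomp Require Import all_boot all_algebra all_field.
Import GRing.Theory Num.Theory.
Set Implicit Arguments. Unset Strict Implicit. Unset Printing Implicit Defensive.
Local Open Scope ring_scope.

Definition gaussian (z : algC) : bool :=
  ('Re z \is a Num.int) && ('Im z \is a Num.int).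

Definition gdvd (d x : algC) : Prop := exists2 q, gaussian q & x = q * d.

Definition gunit (u : algC) : Prop := u = 1 \/ u = -1 \/ u = 'i \/ u = - 'i.

(* gcd(a,b,c) \in U: every Gaussian common divisor of a, b, c is a unit. *)
Definition gcoprime3 (a b c : algC) : Prop :=
  forall d, gaussian d -> gdvd d a -> gdvd d b -> gdvd d c -> gunit d.

(* Write the three numbers as x + i y, so that x + i y is divisible by 1 + i
   iff x + y is even, and by (1 + i)^2 = 2 i iff x and y are both even.  The
   square of x + i y is (x^2 - y^2) + 2 i x y, so a^2 + b^2 + c^2 = 0 gives two
   integer equations; comparing parities in them shows that, unless all three
   numbers are divisible by 1 + i (excluded by coprimality), one of them has
   both coordinates even. *)
From mathcomp Require Import all_boot all_algebra all_field.
From mathcomp Require Import zify ring.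
Import GRing.Theory Num.Theory.
Set Implicit Arguments. Unset Strict Implicit. Unset Printing Implicit Defensive.
Local Open Scope ring_scope.

Definition grect (x y : int) : algC := x%:~R + 'i * y%:~R.

Lemma Re_grect (x y : int) : 'Re (grect x y) = x%:~R.
Proof. by rewrite Re_rect // Rreal_int ?intr_int. Qed.

Lemma Im_grect (x y : int) : 'Im (grect x y) = y%:~R.
Proof. by rewrite Im_rect // Rreal_int ?intr_int. Qed.

Lemma grect_inj (x y x' y' : int) : grect x y = grect x' y' -> x = x' /\ y = y'.
Proof.
move=> e; split; apply/eqP; rewrite -(eqr_int algC).
  by rewrite -(Re_grect x y) e Re_grect.
by rewrite -(Im_grect x y) e Im_grect.
Qed.

Lemma gaussian_grect (x y : int) : gaussian (grect x y).
Proof. by rewrite /gaussian Re_grect Im_grect !intr_int. Qed.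

Lemma gaussianP (z : algC) : gaussian z -> exists x y : int, z = grect x y.
Proof.
case/andP=> /intrP [x Rez] /intrP [y Imz]; exists x, y.
by rewrite {1}[z]algCrect Rez Imz.
Qed.

Lemma grectM (x y x' y' : int) :
  grect x y * grect x' y' = grect (x * x' - y * y') (x * y' + y * x').
Proof.
have sqri := @sqrCi algC.
by rewrite /grect !rmorphD !rmorphN !rmorphM /=; ring: sqri.
Qed.

Lemma gaussianM (z w : algC) : gaussian z -> gaussian w -> gaussian (z * w).
Proof. by move=> /gaussianP [x [y ->]] /gaussianP [x' [y' ->]]; rewrite grectM gaussian_grect. Qed.

Lemma gdvd_mulr (d z w : algC) : gaussian w -> gdvd d z -> gdvd d (z * w).
Proof. by move=> Gw [k Gk ->]; exists (k * w); [exact: gaussianM | rewrite mulrAC]. Qed.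

Lemma gdvd_mull (d z w : algC) : gaussian w -> gdvd d z -> gdvd d (w * z).
Proof. by rewrite mulrC; exact: gdvd_mulr. Qed.

Lemma gdvd_1i_grect (x y : int) : (2 %| x + y)%Z -> gdvd (1 + 'i) (grect x y).
Proof.
move=> even_xy; set k := ((x + y) %/ 2)%Z; set l := ((y - x) %/ 2)%Z.
exists (grect k l); first exact: gaussian_grect.
have -> : x = k - l by rewrite /k /l; lia.
have -> : y = k + l by rewrite /k /l; lia.
have sqri := @sqrCi algC.
by rewrite /grect !rmorphD !rmorphN /=; ring: sqri.
Qed.

Lemma gdvd_1i_sqr_grect (x y : int) :
  (2 %| x)%Z -> (2 %| y)%Z -> gdvd ((1 + 'i) ^+ 2) (grect x y).
Proof.
move=> even_x even_y; set k := (x %/ 2)%Z; set l := (y %/ 2)%Z.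
exists (grect l (- k)); first exact: gaussian_grect.
have -> : x = 2 * k by rewrite /k; lia.
have -> : y = 2 * l by rewrite /l; lia.
have sqri := @sqrCi algC.
by rewrite /grect !rmorphM rmorphN /=; ring: sqri.
Qed.

Lemma grect11 : grect 1 1 = 1 + 'i.
Proof. by rewrite /grect mulr1. Qed.

Lemma not_gunit_1i : ~ gunit (1 + 'i).
Proof.
have [m1 one] : -1 = grect (-1) 0 /\ 1 = grect 1 0 by rewrite /grect !mulr0 !addr0.
have i_E : 'i = grect 0 1 by rewrite /grect mulr1 add0r.
have mi_E : - 'i = grect 0 (-1) by rewrite /grect add0r rmorphN mulrN mulr1.
by rewrite /gunit -grect11 m1 one mi_E i_E => -[|[|[|]]] /grect_inj [].
Qed.

Lemma grect_sqr_sum (p q r s t u : int) :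
  grect p q ^+ 2 + grect r s ^+ 2 + grect t u ^+ 2 =
  grect (p ^+ 2 - q ^+ 2 + r ^+ 2 - s ^+ 2 + t ^+ 2 - u ^+ 2)
        (2 * (p * q + r * s + t * u)).
Proof.
have sqri := @sqrCi algC.
by rewrite /grect !rmorphD !rmorphN !rmorphM /=; ring: sqri.
Qed.

Lemma int_parity (x : int) : exists k, x = 2 * k \/ x = 2 * k + 1.
Proof. by exists (x %/ 2)%Z; lia. Qed.

(* The real-part equation forces an even number of odd sums among p + q,
   r + s, t + u, hence exactly two; for those two pairs one entry is even, so
   the imaginary-part equation forces the third pair to be even, not odd. *)
Lemma sum_sqr0_even_pair (p q r s t u : int) :
  p ^+ 2 - q ^+ 2 + r ^+ 2 - s ^+ 2 + t ^+ 2 - u ^+ 2 = 0 ->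
  p * q + r * s + t * u = 0 ->
  ~~ [&& (2 %| p + q)%Z, (2 %| r + s)%Z & (2 %| t + u)%Z] ->
  [|| (2 %| p)%Z && (2 %| q)%Z, (2 %| r)%Z && (2 %| s)%Z | (2 %| t)%Z && (2 %| u)%Z].
Proof.
rewrite !expr2.
have [p' [->|->]] := int_parity p; have [q' [->|->]] := int_parity q;
have [r' [->|->]] := int_parity r; have [s' [->|->]] := int_parity s;
have [t' [->|->]] := int_parity t; have [u' [->|->]] := int_parity u; lia.
Qed.

Theorem lemma4p1 (a b c : algC) :
  gaussian a -> gaussian b -> gaussian c ->
  a ^+ 2 + b ^+ 2 + c ^+ 2 = 0 ->
  a * b * c != 0 ->
  gcoprime3 a b c ->
  gdvd ((1 + 'i) ^+ 2) (a * b * c).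
Proof.
move=> /gaussianP [p [q ->]] /gaussianP [r [s ->]] /gaussianP [t [u ->]] sum0 _ coprime.
have [re0 im0] : p ^+ 2 - q ^+ 2 + r ^+ 2 - s ^+ 2 + t ^+ 2 - u ^+ 2 = 0
                 /\ 2 * (p * q + r * s + t * u) = 0.
  by apply: grect_inj; rewrite -grect_sqr_sum sum0 /grect mulr0 addr0.
have not_all_1i : ~~ [&& (2 %| p + q)%Z, (2 %| r + s)%Z & (2 %| t + u)%Z].
  apply/negP => /and3P [dvd_a dvd_b dvd_c]; apply: not_gunit_1i.
  by apply: coprime; [rewrite -grect11; apply: gaussian_grect | apply: gdvd_1i_grect ..].
have im0' : p * q + r * s + t * u = 0 by lia.
case/or3P: (sum_sqr0_even_pair re0 im0' not_all_1i) => /andP [ev1 ev2].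
- by do 2 apply: gdvd_mulr (gaussian_grect _ _) _; apply: gdvd_1i_sqr_grect.
- apply: gdvd_mulr (gaussian_grect _ _) _; apply: gdvd_mull (gaussian_grect _ _) _.
  exact: gdvd_1i_sqr_grect.
- apply: gdvd_mull (gaussianM (gaussian_grect _ _) (gaussian_grect _ _)) _.
  exact: gdvd_1i_sqr_grect.
Qed.
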